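(* Let $\Sigma\in\mathbb{R}^{p\times p}$ be positive definite. Then $$\{B\in\mathbb{D}:\ \Sigma=(I-B)^{-T}\Omega(I-B)^{-1}\text{ for some }\Omega\in\mathcal{D}^+\}=\{\tilde B(\pi):\ \pi\text{ a permutation of }[p]\}.$$
   Context: $\mathbb{D}$ is the set of real $p\times p$ matrices whose directed graph (edge $i\to j$ iff $b_{ij}\ne0$) is acyclic. $\mathcal{D}^+$ is the set of $p\times p$ diagonal matrices with positive diagonal entries. For a permutation $\pi$ of $[p]$ and a $p\times p$ matrix $A$, $(P_\pi A)_{ij}=a_{\pi(i)\pi(j)}$. For each $\pi$, write uniquely $P_\pi\Sigma^{-1}=(I-L)D^{-1}(I-L)^T$ with $L$ strictly lower triangular and $D\in\mathcal{D}^+$, and set $\tilde B(\pi)=P_{\pi^{-1}}L$. *)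

From HB Require Import structures.
From mathcomp Require Import all_boot all_order all_algebra all_fingroup.
Set Implicit Arguments. Unset Strict Implicit. Unset Printing Implicit Defensive.
Import Order.TTheory GRing.Theory Num.Theory.
Local Open Scope ring_scope.

Section Defs.
Variables (R : realFieldType) (p : nat).

Definition mx_graph (B : 'M[R]_p) : rel 'I_p := fun i j => B i j != 0.

(* B \in \mathbb{D}: the directed graph of B is acyclic, i.e. there is no
   edge i -> j with a (possibly trivial) path back from j to i. *)
Definition is_dag_mx (B : 'M[R]_p) : Prop :=
  forall i j : 'I_p, mx_graph B i j -> ~~ connect (mx_graph B) j i.

Definition is_posdiag_mx (D : 'M[R]_p) : Prop :=
  is_diag_mx D /\ forall i : 'I_p, 0 < D i i.

Definition is_posdef_mx (S : 'M[R]_p) : Prop :=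
  S^T = S /\ forall x : 'cV[R]_p, x != 0 -> 0 < (x^T *m S *m x) 0 0.

Definition is_strict_lower_mx (L : 'M[R]_p) : Prop :=
  forall i j : 'I_p, (i <= j)%N -> L i j = 0.

Definition permconj (s : 'S_p) (A : 'M[R]_p) : 'M[R]_p :=
  \matrix_(i, j) A (s i) (s j).

(* B = \tilde B(pi): B = P_{pi^{-1}} L where
   P_pi Sigma^{-1} = (I - L) D^{-1} (I - L)^T with L strictly lower
   triangular and D \in \mathcal{D}^+ (this decomposition is unique). *)
Definition is_Btilde (S : 'M[R]_p) (s : 'S_p) (B : 'M[R]_p) : Prop :=
  exists (L D : 'M[R]_p),
    [/\ is_strict_lower_mx L, is_posdiag_mx D,
        permconj s (invmx S) = (1%:M - L) *m invmx D *m (1%:M - L)^T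
      & B = permconj (s^-1)%g L].

End Defs.

(* A matrix B is acyclic exactly when P_pi B (rows and columns permuted
   simultaneously) is strictly lower triangular for some pi: order the vertices
   so that the number of vertices reachable from a vertex decreases along every
   edge. Since P_pi commutes with products, transposes and inverses, the
   factorization Sigma = (I - B)^-T Omega (I - B)^-1 is, after inversion and
   conjugation, the factorization P_pi Sigma^-1 = (I - L) D^-1 (I - L)^T with
   L = P_pi B and D = P_pi Omega, and conversely. *)
From HB Require Import structures.
From mathcomp Require Import all_boot all_order all_algebra all_fingroup zify.
Import Order.TTheory GRing.Theory Num.Theory.
Local Open Scope ring_scope.
Set Implicit Arguments. Unset Strict Implicit.

Section Acyclic.
Variables (T : finType) (e : rel T).

Lemma connect_potential_le (f : T -> nat) :
  (forall x y, e x y -> (f y < f x)%N) ->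
  forall x y, connect e x y -> (f y <= f x)%N.
Proof.
move=> fe x y /connectP [q eq ->] {y}; elim: q x eq => [|z q IHq] x //=.
by move=> /andP [exz eq]; exact: leq_trans (IHq _ eq) (ltnW (fe _ _ exz)).
Qed.

Lemma acyclic_of_potential (f : T -> nat) :
  (forall x y, e x y -> (f y < f x)%N) ->
  forall x y, e x y -> ~~ connect e y x.
Proof.
move=> fe x y exy; apply/negP => /(connect_potential_le fe).
by rewrite leqNgt fe.
Qed.

Definition reach_card (x : T) := #|[set y | connect e x y]|.

Lemma reach_card_decr :
  (forall x y, e x y -> ~~ connect e y x) ->
  forall x y, e x y -> (reach_card y < reach_card x)%N.
Proof.
move=> acyclic x y exy; apply/proper_card/properP; split.
  by apply/subsetP=> z; rewrite !inE; apply: connect_trans (connect1 exy).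
by exists x; rewrite !inE ?connect0 ?acyclic.
Qed.

End Acyclic.

Lemma perm_sorting_key n (key : 'I_n -> nat) : injective key ->
  exists s : 'S_n, forall i j, (key (s j) < key (s i))%N -> (j < i)%N.
Proof.
move=> key_inj; pose rk v := #|[set u | (key u < key v)%N]|.
have rk_lt v : (rk v < n)%N.
  rewrite -[X in (_ < X)%N]card_ord; apply/proper_card/properP.
  by split; [apply/subsetP | exists v; rewrite ?inE ?ltnn].
have rk_mono u v : (key u < key v)%N -> (rk u < rk v)%N.
  move=> kuv; apply/proper_card/properP; split.
    by apply/subsetP=> w; rewrite !inE => /ltn_trans; apply.
  by exists u; rewrite !inE ?ltnn.
have rk_inj : injective (fun v => Ordinal (rk_lt v)).
  move=> u v /(congr1 val) /= ruv; apply: key_inj.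
  by case: (ltngtP (key u) (key v)) => // /rk_mono; rewrite ruv ltnn.
exists (perm rk_inj)^-1%g => i j /rk_mono.
have rkK k : rk ((perm rk_inj)^-1%g k) = k.
  by have := permKV (perm rk_inj) k; rewrite permE => /(congr1 val).
by rewrite !rkK.
Qed.

Lemma topological_perm n (e : rel 'I_n) :
  (forall x y, e x y -> ~~ connect e y x) ->
  exists s : 'S_n, forall i j, e (s i) (s j) -> (j < i)%N.
Proof.
move=> acyclic; pose key (v : 'I_n) := (reach_card e v * n + v)%N.
have key_inj : injective key.
  move=> u v /(congr1 (modn^~ n)); rewrite /key !modnMDl !modn_small //.
  by move/val_inj.
have [s Hs] := perm_sorting_key key_inj; exists s => i j eij; apply: Hs.
have := reach_card_decr acyclic eij; have := ltn_ord (s j).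
rewrite /key; nia.
Qed.

Section Invmx.
Variables (R : comUnitRingType) (n : nat).
Implicit Types A B D : 'M[R]_n.

Lemma invmx_uniq A B : A *m B = 1%:M -> invmx A = B.
Proof.
move=> AB; have [Au _] := mulmx1_unit AB.
by rewrite -[invmx A]mulmx1 -AB mulmxA mulVmx // mul1mx.
Qed.

Lemma invmxM A B : A \in unitmx -> B \in unitmx ->
  invmx (A *m B) = invmx B *m invmx A.
Proof.
move=> Au Bu; apply: invmx_uniq.
by rewrite mulmxA -(mulmxA A) mulmxV // mulmx1 mulmxV.
Qed.

Lemma invmx_congr A D : A \in unitmx -> D \in unitmx ->
  invmx (A *m D *m A^T) = (invmx A)^T *m invmx D *m invmx A.
Proof.
move=> Au Du.
rewrite invmxM ?unitmx_mul ?unitmx_tr ?Au ?Du // invmxM // trmx_inv.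
by rewrite mulmxA.
Qed.

End Invmx.

Section Permconj.
Variables (R : realFieldType) (p : nat).
Implicit Types A B D L : 'M[R]_p.
Implicit Types s : 'S_p.

Lemma permconjE s A : permconj s A = perm_mx s *m A *m perm_mx s^-1.
Proof.
rewrite -col_permE -row_permE.
by apply/matrixP=> i j; rewrite !mxE.
Qed.

Lemma permconjM s A B : permconj s (A *m B) = permconj s A *m permconj s B.
Proof.
rewrite !permconjE !mulmxA -(mulmxA _ _ (perm_mx s)) -perm_mxM mulVg.
by rewrite perm_mx1 mulmx1.
Qed.

Lemma permconjT s A : permconj s A^T = (permconj s A)^T.
Proof. by apply/matrixP=> i j; rewrite !mxE. Qed.

Lemma permconj1 s : permconj s 1%:M = 1%:M :> 'M[R]_p.
Proof. by rewrite permconjE mulmx1 -perm_mxM mulgV perm_mx1. Qed.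

Lemma permconj1B s A : permconj s (1%:M - A) = 1%:M - permconj s A.
Proof. by apply/matrixP=> i j; rewrite !mxE (inj_eq perm_inj). Qed.

Lemma permconjK s A : permconj s^-1 (permconj s A) = A.
Proof. by apply/matrixP=> i j; rewrite !mxE !permKV. Qed.

Lemma permconj_unit s A : (permconj s A \in unitmx) = (A \in unitmx).
Proof. by rewrite permconjE !unitmx_mul !unitmx_perm andbT. Qed.

Lemma permconjV s A : permconj s (invmx A) = invmx (permconj s A).
Proof.
have [Au|Anu] := boolP (A \in unitmx).
  by symmetry; apply: invmx_uniq; rewrite -permconjM mulmxV // permconj1.
by rewrite !invmx_out // inE /= permconj_unit.
Qed.

Lemma permconj_congr s A D :
  permconj s (A *m D *m A^T) = permconj s A *m permconj s D *m (permconj s A)^T.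
Proof. by rewrite !permconjM permconjT. Qed.

Lemma permconj_posdiag s D : is_posdiag_mx D -> is_posdiag_mx (permconj s D).
Proof.
move=> [/is_diag_mxP Dd Dpos]; split; last by move=> i; rewrite mxE.
apply/is_diag_mxP=> i j ij; rewrite mxE Dd //.
by apply: contra ij => /eqP/val_inj/perm_inj ->.
Qed.

Lemma posdiag_unit D : is_posdiag_mx D -> D \in unitmx.
Proof.
move=> [Dd Dpos]; rewrite unitmxE det_trig ?is_diag_mx_is_trig // unitfE.
by apply/prodf_neq0=> i _; rewrite gt_eqF.
Qed.

Lemma strict_lower_unit L : is_strict_lower_mx L -> 1%:M - L \in unitmx.
Proof.
move=> Ll; rewrite unitmxE det_trig; last first.
  apply/is_trig_mxP=> i j lij.
  by rewrite !mxE Ll ?(ltnW lij) // eqE /= ltn_eqF // subr0.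
rewrite (eq_bigr (fun=> 1)) ?prodr_const ?expr1n ?unitr1 // => i _.
by rewrite !mxE eqxx Ll // subr0.
Qed.

Lemma dag_permconj_strict_lower s L :
  is_strict_lower_mx L -> is_dag_mx (permconj s^-1 L).
Proof.
move=> Ll; apply: (@acyclic_of_potential _ _ (fun i => s^-1%g i)) => i j.
by rewrite /mx_graph mxE; apply: contraR; rewrite -leqNgt => /Ll ->.
Qed.

Lemma strict_lower_permconj_of_dag B :
  is_dag_mx B -> exists s, is_strict_lower_mx (permconj s B).
Proof.
move=> /topological_perm [s Bs]; exists s => i j; rewrite mxE => ij.
by apply/eqP; apply: contraLR ij => /Bs; rewrite -ltnNge.
Qed.

End Permconj.

Section Btilde.
Variables (R : realFieldType) (p : nat) (S : 'M[R]_p).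

Lemma Btilde_of_dag_factor B Om :
  is_dag_mx B -> is_posdiag_mx Om ->
  S = (invmx (1%:M - B))^T *m Om *m invmx (1%:M - B) ->
  exists s : 'S_p, is_Btilde S s B.
Proof.
move=> /strict_lower_permconj_of_dag [s Ll] Om_pd ->.
have Bu : 1%:M - B \in unitmx.
  by rewrite -(permconj_unit s) permconj1B strict_lower_unit.
exists s, (permconj s B), (permconj s Om); split => //.
- exact: permconj_posdiag.
- rewrite -{2}[invmx (1%:M - B)]trmxK invmx_congr ?unitmx_tr ?unitmx_inv //;
    last exact: posdiag_unit.
  by rewrite !trmx_inv trmxK !invmxK permconj_congr permconj1B permconjV.
- by rewrite permconjK.
Qed.

Lemma dag_factor_of_Btilde s B :
  is_Btilde S s B ->
  is_dag_mx B /\ exists Om, is_posdiag_mx Om /\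
    S = (invmx (1%:M - B))^T *m Om *m invmx (1%:M - B).
Proof.
move=> [L [D [Ll D_pd SV ->]]]; split; first exact: dag_permconj_strict_lower.
exists (permconj s^-1 D); split; first exact: permconj_posdiag.
have := congr1 (permconj s^-1) SV.
rewrite permconjK permconj_congr permconjV -permconj1B => SVs.
rewrite -[S]invmxK SVs invmx_congr ?invmxK ?unitmx_inv ?permconj_unit //.
  exact: strict_lower_unit.
exact: posdiag_unit.
Qed.

End Btilde.

Theorem lemma1 (R : realFieldType) (p : nat) (S : 'M[R]_p) :
  is_posdef_mx S ->
  forall B : 'M[R]_p,
    (is_dag_mx B /\
     exists Om : 'M[R]_p, is_posdiag_mx Om /\
       S = (invmx (1%:M - B))^T *m Om *m invmx (1%:M - B))
    <-> (exists s : 'S_p, is_Btilde S s B).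
Proof.
move=> _ B; split.
  by move=> [B_dag [Om [Om_pd SE]]]; exact: Btilde_of_dag_factor B_dag Om_pd SE.
by move=> [s]; exact: dag_factor_of_Btilde.
Qed.
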